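(* Let $(\mathcal H,\mathfrak A_0)$ be a Hilbert quasi *-algebra satisfying condition (P), and assume that $\mathcal H^+_{wb}:=\{\xi\in\mathcal H_b:\langle\xi x,x\rangle\ge0\ \forall x\in\mathfrak A_0\}\subseteq\mathcal H^+$. Then $\mathcal H^+=\mathcal H^+_w$.
   Context: A Hilbert algebra is a *-algebra $\mathfrak A_0$ with an inner product $\langle\cdot,\cdot\rangle$ such that (i) for each $x$, $y\mapsto xy$ is continuous for the inner product norm; (ii) $\langle xy,z\rangle=\langle y,x^*z\rangle$ for all $x,y,z$; (iii) $\langle x,y\rangle=\langle y^*,x^*\rangle$ for all $x,y$; (iv) the linear span of $\{xy:x,y\in\mathfrak A_0\}$ is dense in $\mathfrak A_0$. Let $\mathcal H$ be the Hilbert space completion of $\mathfrak A_0$; the involution extends isometrically to $\mathcal H$, and the products $\xi x$, $x\xi$ for $\xi\in\mathcal H$, $x\in\mathfrak A_0$ are defined by continuity. It is assumed that (A): if $\xi\in\mathcal H$ and $\xi x=0$ for all $x\in\mathfrak A_0$ then $\xi=0$. With these operations $(\mathcal H,\mathfrak A_0)$ is called a Hilbert quasi *-algebra. $\xi\in\mathcal H$ is bounded if $x\mapsto\xi x$ is bounded on $\mathfrak A_0$; $\mathcal H_b$ is the set of bounded elements. $\mathfrak A_0^+=\{\sum_{k=1}^n x_k^*x_k: x_k\in\mathfrak A_0,n\in\mathbb N\}$, $\mathcal H^+$ is its norm closure in $\mathcal H$, and $\mathcal H^+_w=\{\xi\in\mathcal H:\langle\xi x,x\rangle\ge0\ \forall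 x\in\mathfrak A_0\}$. A linear functional $\omega$ on $\mathcal H$ is representable if (L.1) $\omega(x^*x)\ge0$ for all $x\in\mathfrak A_0$; (L.2) $\omega(y^*\xi^*x)=\overline{\omega(x^*\xi y)}$ for all $x,y\in\mathfrak A_0$, $\xi\in\mathcal H$; (L.3) for every $\xi\in\mathcal H$ there is $\gamma_\xi>0$ with $|\omega(\xi^*x)|\le\gamma_\xi\,\omega(x^*x)^{1/2}$ for all $x\in\mathfrak A_0$; $\mathcal R_c(\mathcal H,\mathfrak A_0)$ is the set of continuous representable functionals. Condition (P): if $\xi\in\mathcal H$ and $\omega(x^*\xi x)\ge0$ for every $\omega\in\mathcal R_c(\mathcal H,\mathfrak A_0)$ and every $x\in\mathfrak A_0$, then $\xi\in\mathcal H^+$. *)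

From Stdlib Require Import Reals List.
Import ListNotations.
Open Scope R_scope.

Record C := mkC { Re : R ; Im : R }.
Definition C0 : C := mkC 0 0.
Definition C1 : C := mkC 1 0.
Definition Cadd (a b : C) : C := mkC (Re a + Re b) (Im a + Im b).
Definition Cmul (a b : C) : C :=
  mkC (Re a * Re b - Im a * Im b) (Re a * Im b + Im a * Re b).
Definition Cconj (a : C) : C := mkC (Re a) (- Im a).
Definition Cabs (a : C) : R := sqrt (Re a * Re a + Im a * Im a).
Definition Cnonneg (a : C) : Prop := Im a = 0 /\ 0 <= Re a.

(** * Hilbert quasi *-algebras (H, A0)
   [car] is the Hilbert space H (complex inner product space, complete);
   [A0] is a dense subspace which is a *-algebra (Hilbert algebra axioms
   (i)-(iv)); [mul] restricted to H x A0 and A0 x H is the continuous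
   extension of the product of A0 (it is bounded in the H-variable and agrees
   with the algebra product on A0, hence is uniquely determined); [inv] is the
   isometric extension of the involution of A0.  Values of [mul] when neither
   factor lies in A0 are irrelevant junk and never used.  Condition (A) is
   included. *)
Record HQA := {
  car :> Type;
  vadd : car -> car -> car;
  vzero : car;
  vopp : car -> car;
  vscal : C -> car -> car;
  vadd_assoc : forall x y z, vadd x (vadd y z) = vadd (vadd x y) z;
  vadd_comm : forall x y, vadd x y = vadd y x;
  vadd_0 : forall x, vadd x vzero = x;
  vadd_opp : forall x, vadd x (vopp x) = vzero;
  vscal_1 : forall x, vscal C1 x = x;
  vscal_assoc : forall a b x, vscal a (vscal b x) = vscal (Cmul a b) x;
  vscal_distr_v : forall a x y, vscal a (vadd x y) = vadd (vscal a x) (vscal a y);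
  vscal_distr_s : forall a b x, vscal (Cadd a b) x = vadd (vscal a x) (vscal b x);

  ip : car -> car -> C;
  ip_addl : forall x y z, ip (vadd x y) z = Cadd (ip x z) (ip y z);
  ip_scall : forall a x y, ip (vscal a x) y = Cmul a (ip x y);
  ip_herm : forall x y, ip y x = Cconj (ip x y);
  ip_pos : forall x, Cnonneg (ip x x);
  ip_def : forall x, ip x x = C0 -> x = vzero;

  complete : forall u : nat -> car,
    (forall eps, 0 < eps -> exists N, forall m n, (N <= m)%nat -> (N <= n)%nat ->
        sqrt (Re (ip (vadd (u m) (vopp (u n))) (vadd (u m) (vopp (u n))))) < eps) ->
    exists l, forall eps, 0 < eps -> exists N, forall n, (N <= n)%nat ->
        sqrt (Re (ip (vadd (u n) (vopp l)) (vadd (u n) (vopp l)))) < eps;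

  A0 : car -> Prop;
  A0_zero : A0 vzero;
  A0_add : forall x y, A0 x -> A0 y -> A0 (vadd x y);
  A0_scal : forall a x, A0 x -> A0 (vscal a x);
  A0_dense : forall xi eps, 0 < eps -> exists x, A0 x /\
      sqrt (Re (ip (vadd xi (vopp x)) (vadd xi (vopp x)))) < eps;

  mul : car -> car -> car;
  inv : car -> car;
  A0_mul : forall x y, A0 x -> A0 y -> A0 (mul x y);
  A0_inv : forall x, A0 x -> A0 (inv x);
  mul_assoc : forall x y z, A0 x -> A0 y -> A0 z -> mul x (mul y z) = mul (mul x y) z;
  mul_addl : forall x xi eta, A0 x -> mul (vadd xi eta) x = vadd (mul xi x) (mul eta x);
  mul_scall : forall x a xi, A0 x -> mul (vscal a xi) x = vscal a (mul xi x);
  mul_addr : forall x xi eta, A0 x -> mul x (vadd xi eta) = vadd (mul x xi) (mul x eta);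
  mul_scalr : forall x a xi, A0 x -> mul x (vscal a xi) = vscal a (mul x xi);
  mul_boundl : forall x, A0 x -> exists M, forall xi,
      sqrt (Re (ip (mul xi x) (mul xi x))) <= M * sqrt (Re (ip xi xi));
  mul_boundr : forall x, A0 x -> exists M, forall xi,
      sqrt (Re (ip (mul x xi) (mul x xi))) <= M * sqrt (Re (ip xi xi));
  inv_add : forall xi eta, inv (vadd xi eta) = vadd (inv xi) (inv eta);
  inv_scal : forall a xi, inv (vscal a xi) = vscal (Cconj a) (inv xi);
  inv_inv : forall xi, inv (inv xi) = xi;
  inv_isom : forall xi, ip (inv xi) (inv xi) = ip xi xi;
  inv_mul : forall x y, A0 x -> A0 y -> inv (mul x y) = mul (inv y) (inv x);
  hax_ii : forall x y z, A0 x -> A0 y -> A0 z -> ip (mul x y) z = ip y (mul (inv x) z);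
  hax_iii : forall x y, A0 x -> A0 y -> ip x y = ip (inv y) (inv x);
  hax_iv : forall x eps, A0 x -> 0 < eps -> exists l : list (car * car),
      (forall p, In p l -> A0 (fst p) /\ A0 (snd p)) /\
      let s := fold_right (fun p acc => vadd (mul (fst p) (snd p)) acc) vzero l in
      sqrt (Re (ip (vadd x (vopp s)) (vadd x (vopp s)))) < eps;
  cond_A : forall xi, (forall x, A0 x -> mul xi x = vzero) -> xi = vzero
}.

Section Notions.
Variable X : HQA.

Definition hnorm (xi : car X) : R := sqrt (Re (ip X xi xi)).

Definition bounded_elt (xi : car X) : Prop :=
  exists M, forall x, A0 X x -> hnorm (mul X xi x) <= M * hnorm x.

Definition A0plus (xi : car X) : Prop :=
  exists l : list (car X), (forall x, In x l -> A0 X x) /\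
    xi = fold_right (fun x acc => vadd X (mul X (inv X x) x) acc) (vzero X) l.

Definition Hplus (xi : car X) : Prop :=
  forall eps, 0 < eps -> exists a, A0plus a /\ hnorm (vadd X xi (vopp X a)) < eps.

Definition Hplus_w (xi : car X) : Prop :=
  forall x, A0 X x -> Cnonneg (ip X (mul X xi x) x).

Definition Hplus_wb (xi : car X) : Prop := bounded_elt xi /\ Hplus_w xi.

Definition linear_functional (w : car X -> C) : Prop :=
  (forall xi eta, w (vadd X xi eta) = Cadd (w xi) (w eta)) /\
  (forall a xi, w (vscal X a xi) = Cmul a (w xi)).

Definition representable (w : car X -> C) : Prop :=
  linear_functional w /\
  (forall x, A0 X x -> Cnonneg (w (mul X (inv X x) x))) /\
  (forall x y xi, A0 X x -> A0 X y ->
     w (mul X (mul X (inv X y) (inv X xi)) x) = Cconj (w (mul X (mul X (inv X x) xi) y))) /\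
  (forall xi, exists g, 0 < g /\ forall x, A0 X x ->
     Cabs (w (mul X (inv X xi) x)) <= g * sqrt (Re (w (mul X (inv X x) x)))).

Definition continuous_functional (w : car X -> C) : Prop :=
  exists M, forall xi, Cabs (w xi) <= M * hnorm xi.

Definition Rc (w : car X -> C) : Prop := representable w /\ continuous_functional w.

Definition condP : Prop :=
  forall xi, (forall w, Rc w -> forall x, A0 X x ->
                Cnonneg (w (mul X (mul X (inv X x) xi) x))) -> Hplus xi.

End Notions.

From Pilot Require Import Defs.
From Stdlib Require Import Reals Lra Psatz ClassicalEpsilon Classical.
Open Scope R_scope.

(* H^+ is contained in H^+_w because each [xi |-> <xi x, x>] is continuous and nonnegative on
   A0^+.  Conversely let [xi] be in H^+_w; by (P) it suffices that [w (x^* xi x) >= 0] for every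
   continuous representable [w].  By Riesz, [w = <., eta>].  Condition (L.1) makes [eta] weakly
   positive, and (L.3), made uniform in [xi] by the Baire category theorem, makes [eta] bounded;
   so [eta] is in H^+ by hypothesis.  Finally [<a, x^* xi x> >= 0] for [a] in A0^+, since
   [<x^* xi x, y^* y> = <xi z, z>] with [z = x y^*], and this passes to the closure. *)

(* [Reals] also exports the binomial coefficient [C]. *)
Notation C := Defs.C.

Lemma Ceq (a b : C) : Re a = Re b -> Im a = Im b -> a = b.
Proof. destruct a, b; simpl; intros; subst; reflexivity. Qed.

Ltac csimpl := unfold Cmul, Cadd, Cconj, Defs.C0, Defs.C1 in *; cbn [Re Im] in *.

Definition Copp (a : C) : C := mkC (- Re a) (- Im a).
Definition Cm1 : C := mkC (-1) 0.

Lemma Cnonneg_add a b : Cnonneg a -> Cnonneg b -> Cnonneg (Cadd a b).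
Proof. unfold Cnonneg; intros [] []; csimpl; split; lra. Qed.

Lemma Cnonneg_conj a : Cnonneg a -> Cnonneg (Cconj a).
Proof. unfold Cnonneg; intros []; csimpl; split; lra. Qed.

Lemma Cabs_ge0 a : 0 <= Cabs a.
Proof. apply sqrt_pos. Qed.

Lemma Re_le_Cabs a : Rabs (Re a) <= Cabs a.
Proof. unfold Cabs. rewrite <- sqrt_Rsqr_abs. apply sqrt_le_1_alt. unfold Rsqr. nra. Qed.

Lemma Im_le_Cabs a : Rabs (Im a) <= Cabs a.
Proof. unfold Cabs. rewrite <- sqrt_Rsqr_abs. apply sqrt_le_1_alt. unfold Rsqr. nra. Qed.

Lemma Cabs_sq a : Cabs a * Cabs a = Re a * Re a + Im a * Im a.
Proof. unfold Cabs. apply sqrt_sqrt. nra. Qed.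

Lemma Cabs_add a b : Cabs (Cadd a b) <= Cabs a + Cabs b.
Proof.
  pose proof (Cabs_ge0 a); pose proof (Cabs_ge0 b).
  pose proof (Cabs_sq a) as Ea; pose proof (Cabs_sq b) as Eb.
  assert (Re a * Re b + Im a * Im b <= Cabs a * Cabs b).
  { destruct (Rle_or_lt (Re a * Re b + Im a * Im b) 0); [nra|].
    apply Rsqr_incr_0_var; [|nra]. unfold Rsqr.
    replace (Cabs a * Cabs b * (Cabs a * Cabs b)) with ((Cabs a * Cabs a) * (Cabs b * Cabs b)) by ring.
    rewrite Ea, Eb. pose proof (Rle_0_sqr (Re a * Im b - Im a * Re b)); unfold Rsqr in *; nra. }
  apply Rsqr_incr_0_var; [|lra]. unfold Rsqr.
  rewrite Cabs_sq. csimpl. nra.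
Qed.

Lemma Cabs_mul a b : Cabs (Cmul a b) = Cabs a * Cabs b.
Proof. unfold Cabs. rewrite <- sqrt_mult; [|nra|nra]. f_equal. csimpl. ring. Qed.

Lemma Cabs_conj a : Cabs (Cconj a) = Cabs a.
Proof. unfold Cabs; csimpl; f_equal; ring. Qed.

Lemma Cabs_opp a : Cabs (Copp a) = Cabs a.
Proof. unfold Cabs, Copp; cbn [Re Im]; f_equal; ring. Qed.

Lemma Cabs_real r : Cabs (mkC r 0) = Rabs r.
Proof. unfold Cabs; cbn [Re Im]. rewrite <- sqrt_Rsqr_abs. f_equal. unfold Rsqr; ring. Qed.

Lemma Cabs_eq0 a : Cabs a = 0 -> a = C0.
Proof. intros H. pose proof (Cabs_sq a) as E. rewrite H in E. apply Ceq; csimpl; nra. Qed.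

Lemma Cabs_small a : (forall eps, 0 < eps -> Cabs a < eps) -> a = C0.
Proof.
  intros H. apply Cabs_eq0. pose proof (Cabs_ge0 a).
  destruct (Req_dec (Cabs a) 0); auto. specialize (H (Cabs a)). lra.
Qed.

Lemma Cabs_sub_le a b : Cabs a <= Cabs (Cadd b a) + Cabs b.
Proof.
  replace a with (Cadd (Cadd b a) (Copp b)) at 1 by (apply Ceq; unfold Copp; csimpl; ring).
  eapply Rle_trans; [apply Cabs_add|]. rewrite Cabs_opp. lra.
Qed.

Lemma inv_INR_small eps : 0 < eps -> exists N, forall n, (N <= n)%nat -> / (INR n + 1) < eps.
Proof.
  intros He. destruct (archimed (/ eps)) as [Ha _].
  assert (0 < / eps) by (apply Rinv_0_lt_compat; auto).
  destruct (IZN (up (/ eps))) as [N HN]. { apply le_IZR. lra. }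
  rewrite HN, <- INR_IZR_INZ in Ha. exists N. intros n Hn. apply le_INR in Hn.
  rewrite <- (Rinv_inv eps). apply Rinv_lt_contravar; nra.
Qed.

Lemma lt_div_mul a b eps : 0 < b -> a < eps / b -> a * b < eps.
Proof.
  intros Hb H. apply (Rmult_lt_compat_r b) in H; auto.
  unfold Rdiv in H. rewrite Rmult_assoc, Rinv_l in H by lra. lra.
Qed.
Notation vsub x y := (vadd _ x (vopp _ y)).

Section VectorSpace.
Context {X : HQA}.
Implicit Types x y z : car X.

Lemma vadd_0l x : vadd X (vzero X) x = x.
Proof. rewrite vadd_comm. apply vadd_0. Qed.

Lemma vadd_cancel x y z : vadd X x y = vadd X x z -> y = z.
Proof.
  intros H. rewrite <- (vadd_0l y), <- (vadd_0l z), <- (vadd_opp X x), (vadd_comm X x).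
  rewrite <- !vadd_assoc, H. reflexivity.
Qed.

Lemma vscal_0 x : vscal X C0 x = vzero X.
Proof.
  apply (vadd_cancel (vscal X C0 x)). rewrite vadd_0, <- vscal_distr_s.
  f_equal. apply Ceq; csimpl; lra.
Qed.

Lemma vopp_scal x : vopp X x = vscal X Cm1 x.
Proof.
  apply (vadd_cancel x). rewrite vadd_opp.
  rewrite <- (vscal_1 X x) at 1. rewrite <- vscal_distr_s, <- (vscal_0 x).
  f_equal. apply Ceq; unfold Cm1; csimpl; lra.
Qed.

Lemma vopp_vscal a x : vopp X (vscal X a x) = vscal X (Copp a) x.
Proof. rewrite vopp_scal, vscal_assoc. f_equal. apply Ceq; unfold Cm1, Copp; csimpl; ring. Qed.

Lemma vopp_add x y : vopp X (vadd X x y) = vadd X (vopp X x) (vopp X y).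
Proof. rewrite !vopp_scal. apply vscal_distr_v. Qed.

Lemma vopp_opp x : vopp X (vopp X x) = x.
Proof.
  rewrite !vopp_scal, vscal_assoc. rewrite <- (vscal_1 X x) at 2.
  f_equal. apply Ceq; unfold Cm1; csimpl; lra.
Qed.

Lemma vsubK x y : vadd X (vsub x y) y = x.
Proof. rewrite <- vadd_assoc, (vadd_comm X (vopp X y)), vadd_opp, vadd_0. reflexivity. Qed.

Lemma vsub_trans x y z : vsub x z = vadd X (vsub x y) (vsub y z).
Proof. rewrite <- vadd_assoc, (vadd_assoc X (vopp X y)), (vadd_comm X (vopp X y) y), vadd_opp, vadd_0l. reflexivity. Qed.

Lemma vadd_swap a b c d : vadd X (vadd X a b) (vadd X c d) = vadd X (vadd X a c) (vadd X b d).
Proof. rewrite <- !vadd_assoc. f_equal. rewrite !vadd_assoc. f_equal. apply vadd_comm. Qed.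

Lemma lf_add f x y : linear_functional X f -> f (vadd X x y) = Cadd (f x) (f y).
Proof. intros [H _]; apply H. Qed.

Lemma lf_scal f a x : linear_functional X f -> f (vscal X a x) = Cmul a (f x).
Proof. intros [_ H]; apply H. Qed.

Lemma lf_opp f x : linear_functional X f -> f (vopp X x) = Copp (f x).
Proof. intros Hf. rewrite vopp_scal, lf_scal by auto. apply Ceq; unfold Cm1, Copp; csimpl; ring. Qed.

Lemma lf_zero f : linear_functional X f -> f (vzero X) = C0.
Proof. intros Hf. rewrite <- (vscal_0 (vzero X)), lf_scal by auto. apply Ceq; csimpl; ring. Qed.

Lemma lf_split f x a : linear_functional X f -> f x = Cadd (f (vsub x a)) (f a).
Proof. intros Hf. rewrite <- lf_add, vsubK by auto. reflexivity. Qed.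

End VectorSpace.
Section InnerProduct.
Context {X : HQA}.
Implicit Types x y z : car X.

Lemma ip_addr x y z : ip X x (vadd X y z) = Cadd (ip X x y) (ip X x z).
Proof.
  rewrite (ip_herm X (vadd X y z) x), ip_addl, (ip_herm X x y), (ip_herm X x z).
  apply Ceq; csimpl; lra.
Qed.

Lemma ip_scalr a x y : ip X x (vscal X a y) = Cmul (Cconj a) (ip X x y).
Proof. rewrite (ip_herm X (vscal X a y) x), ip_scall, (ip_herm X x y). apply Ceq; csimpl; ring. Qed.

Lemma ip_0l y : ip X (vzero X) y = C0.
Proof. rewrite <- (vscal_0 y), ip_scall. apply Ceq; csimpl; ring. Qed.

Lemma ip_0r y : ip X y (vzero X) = C0.
Proof. rewrite <- (vscal_0 y), ip_scalr. apply Ceq; csimpl; ring. Qed.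

Definition nsq x := Re (ip X x x).

Lemma nsq_ge0 x : 0 <= nsq x.
Proof. apply (ip_pos X x). Qed.

Lemma ip_self x : ip X x x = mkC (nsq x) 0.
Proof. apply Ceq; simpl; [reflexivity | apply (ip_pos X x)]. Qed.

Lemma nsq_eq0 x : nsq x = 0 -> x = vzero X.
Proof. intros H. apply ip_def. rewrite ip_self, H. reflexivity. Qed.

Lemma hnorm_ge0 x : 0 <= hnorm X x.
Proof. apply sqrt_pos. Qed.

Lemma hnorm_sq x : hnorm X x * hnorm X x = nsq x.
Proof. apply sqrt_sqrt, nsq_ge0. Qed.

Lemma hnorm_eq0 x : hnorm X x = 0 -> x = vzero X.
Proof. intros H. apply nsq_eq0. rewrite <- hnorm_sq, H. ring. Qed.

Lemma hnorm_zero : hnorm X (vzero X) = 0.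
Proof. unfold hnorm. rewrite ip_0l. apply sqrt_0. Qed.

Lemma nsq_add_scal a x y :
  nsq (vadd X x (vscal X a y)) =
  nsq x + 2 * (Re a * Re (ip X y x) - Im a * Im (ip X y x)) + (Re a * Re a + Im a * Im a) * nsq y.
Proof.
  unfold nsq. rewrite ip_addl, !ip_addr, !ip_scall, !ip_scalr, (ip_herm X x y), (ip_self y).
  csimpl. unfold nsq. ring.
Qed.

Lemma nsq_scal a x : nsq (vscal X a x) = (Re a * Re a + Im a * Im a) * nsq x.
Proof. unfold nsq. rewrite ip_scall, ip_scalr, ip_self. csimpl. ring. Qed.

Lemma hnorm_scal a x : hnorm X (vscal X a x) = Cabs a * hnorm X x.
Proof. unfold hnorm, Cabs. rewrite <- sqrt_mult; [|nra|apply nsq_ge0]. f_equal. apply nsq_scal. Qed.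

Lemma hnorm_opp x : hnorm X (vopp X x) = hnorm X x.
Proof.
  rewrite vopp_scal, hnorm_scal. unfold Cm1. rewrite Cabs_real. replace (Rabs (-1)) with 1 by (rewrite Rabs_left; lra). ring.
Qed.

Lemma hnorm_inv x : hnorm X (inv X x) = hnorm X x.
Proof. unfold hnorm. rewrite inv_isom. reflexivity. Qed.

(* Expand [nsq (x - (<x,y>/nsq y) y) >= 0]. *)
Lemma Cauchy_Schwarz x y : Cabs (ip X x y) <= hnorm X x * hnorm X y.
Proof.
  pose proof (hnorm_ge0 x); pose proof (hnorm_ge0 y); pose proof (nsq_ge0 y).
  destruct (Req_dec (nsq y) 0) as [Hy|Hy].
  { apply nsq_eq0 in Hy. subst. rewrite ip_0r, hnorm_zero. unfold Cabs; csimpl.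
    replace (0 * 0 + 0 * 0) with 0 by ring. rewrite sqrt_0. lra. }
  set (c := ip X x y). set (t := / nsq y).
  assert (Ht : t * nsq y = 1) by (unfold t; field; auto).
  pose proof (nsq_ge0 (vadd X x (vscal X (mkC (- t * Re c) (- t * Im c)) y))) as P.
  rewrite nsq_add_scal, (ip_herm X x y) in P. fold c in P. csimpl.
  assert (Hc : Re c * Re c + Im c * Im c <= nsq x * nsq y).
  { assert (P' : 0 <= (nsq x - t * (Re c * Re c + Im c * Im c)) * nsq y).
    { apply Rmult_le_pos; [|lra].
      replace (nsq x - t * (Re c * Re c + Im c * Im c)) with
        (nsq x + 2 * (- t * Re c * Re c - - t * Im c * - Im c) +
         (- t * Re c * (- t * Re c) + - t * Im c * (- t * Im c)) * nsq y); [exact P|].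
      transitivity (nsq x - t * (Re c * Re c + Im c * Im c) * (2 - t * nsq y)); [ring|].
      rewrite Ht. ring. }
    replace ((nsq x - t * (Re c * Re c + Im c * Im c)) * nsq y)
      with (nsq x * nsq y - (Re c * Re c + Im c * Im c) * (t * nsq y)) in P' by ring.
    rewrite Ht in P'. lra. }
  apply Rsqr_incr_0_var; [|nra]. unfold Rsqr.
  rewrite Cabs_sq.
  replace (hnorm X x * hnorm X y * (hnorm X x * hnorm X y))
    with ((hnorm X x * hnorm X x) * (hnorm X y * hnorm X y)) by ring.
  rewrite !hnorm_sq. exact Hc.
Qed.

Lemma hnorm_triangle x y : hnorm X (vadd X x y) <= hnorm X x + hnorm X y.
Proof.
  pose proof (hnorm_ge0 x); pose proof (hnorm_ge0 y).
  pose proof (Cauchy_Schwarz y x); pose proof (Re_le_Cabs (ip X y x)).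
  pose proof (Rle_abs (Re (ip X y x))).
  apply Rsqr_incr_0_var; [|nra]. unfold Rsqr.
  rewrite hnorm_sq, <- (vscal_1 X y), nsq_add_scal, vscal_1.
  unfold Defs.C1; cbn [Re Im]. rewrite <- !hnorm_sq. nra.
Qed.

Lemma hnorm_sub_sym x y : hnorm X (vsub x y) = hnorm X (vsub y x).
Proof. rewrite <- hnorm_opp, vopp_add, vopp_opp, vadd_comm. reflexivity. Qed.

Lemma hnorm_sub_triangle x y z : hnorm X (vsub x z) <= hnorm X (vsub x y) + hnorm X (vsub y z).
Proof. rewrite (vsub_trans x y z). apply hnorm_triangle. Qed.

Lemma parallelogram a b : nsq (vadd X a b) + nsq (vsub a b) = 2 * nsq a + 2 * nsq b.
Proof.
  rewrite <- (vscal_1 X b) at 1. rewrite vopp_scal, !nsq_add_scal.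
  unfold Cm1, Defs.C1; cbn [Re Im]. ring.
Qed.

End InnerProduct.
Lemma Cnonneg_closed z :
  (forall eps, 0 < eps -> exists a, Cnonneg a /\ Cabs (Cadd z (Copp a)) < eps) -> Cnonneg z.
Proof.
  intros H.
  assert (Hz : forall eps, 0 < eps -> Rabs (Im z) < eps /\ - eps < Re z).
  { intros eps He. destruct (H eps He) as [a [[Ia Ra] Ha]].
    pose proof (Re_le_Cabs (Cadd z (Copp a))); pose proof (Im_le_Cabs (Cadd z (Copp a))).
    unfold Copp in *; csimpl. rewrite Ia, Ropp_0, Rplus_0_r in *.
    pose proof (Rle_abs (- (Re z + - Re a))). rewrite Rabs_Ropp in *. lra. }
  split.
  - destruct (Req_dec (Im z) 0) as [|Hne]; auto.
    destruct (Hz (Rabs (Im z))) as [A _]; [apply Rabs_pos_lt; auto | lra].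
  - destruct (Rle_or_lt 0 (Re z)) as [|Hlt]; auto.
    destruct (Hz (- Re z)) as [_ A]; lra.
Qed.

Section Functionals.
Context {X : HQA}.
Implicit Types x y z : car X.

Definition in_closure (P : car X -> Prop) x : Prop :=
  forall eps, 0 < eps -> exists a, P a /\ hnorm X (vsub x a) < eps.

Lemma continuous_functional_bound f :
  continuous_functional X f -> exists M, 0 <= M /\ forall x, Cabs (f x) <= M * hnorm X x.
Proof.
  intros [K HK]. exists (Rabs K). split; [apply Rabs_pos|].
  intros x. pose proof (HK x). pose proof (Rle_abs K). pose proof (hnorm_ge0 x). nra.
Qed.

Lemma continuous_lf_approx f P x :
  linear_functional X f -> continuous_functional X f -> in_closure P x ->
  forall eps, 0 < eps -> exists a, P a /\ Cabs (Cadd (f x) (Copp (f a))) < eps.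
Proof.
  intros Hf Hc Hx eps He.
  destruct (continuous_functional_bound f Hc) as [M [HM0 HM]].
  destruct (Hx (eps / (M + 1))) as [a [Pa Ha]]; [apply Rdiv_lt_0_compat; lra|].
  exists a. split; auto.
  replace (Cadd (f x) (Copp (f a))) with (f (vsub x a))
    by (rewrite (lf_split f x a Hf); apply Ceq; unfold Copp; csimpl; ring).
  apply lt_div_mul in Ha; [|lra].
  pose proof (HM (vsub x a)). pose proof (hnorm_ge0 (vsub x a)). nra.
Qed.

Lemma continuous_lf_eq_on_dense f g :
  linear_functional X f -> linear_functional X g ->
  continuous_functional X f -> continuous_functional X g ->
  (forall a, A0 X a -> f a = g a) -> forall x, f x = g x.
Proof.
  intros Hf Hg Cf Cg Hfg x.
  set (h := fun x => Cadd (f x) (Copp (g x))).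
  assert (Hh : linear_functional X h).
  { split; intros; unfold h; rewrite ?lf_add, ?lf_scal by auto;
      apply Ceq; unfold Copp; csimpl; ring. }
  assert (Ch : continuous_functional X h).
  { destruct (continuous_functional_bound f Cf) as [M [_ HM]].
    destruct (continuous_functional_bound g Cg) as [N [_ HN]].
    exists (M + N). intros y. unfold h. eapply Rle_trans; [apply Cabs_add|].
    rewrite Cabs_opp. pose proof (HM y). pose proof (HN y). lra. }
  assert (Hx : h x = C0).
  { apply Cabs_small. intros eps He.
    destruct (continuous_lf_approx h (A0 X) x Hh Ch (fun e He => A0_dense X x e He) eps He)
      as [a [Ha Hlt]].
    replace (h x) with (Cadd (h x) (Copp (h a))); auto.
    unfold h at 2. rewrite (Hfg a Ha). apply Ceq; unfold Copp; csimpl; ring. }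
  unfold h in Hx. apply Ceq; [apply (f_equal Re) in Hx | apply (f_equal Im) in Hx];
    unfold Copp in Hx; csimpl; lra.
Qed.

Lemma continuous_lf_closure_nonneg f P x :
  linear_functional X f -> continuous_functional X f -> in_closure P x ->
  (forall a, P a -> Cnonneg (f a)) -> Cnonneg (f x).
Proof.
  intros Hf Hc Hx HP. apply Cnonneg_closed. intros eps He.
  destruct (continuous_lf_approx f P x Hf Hc Hx eps He) as [a [Pa Ha]].
  exists (f a). auto.
Qed.

Lemma linear_ipl v : linear_functional X (fun z => ip X z v).
Proof. split; intros; [apply ip_addl | apply ip_scall]. Qed.

Lemma continuous_ipl v : continuous_functional X (fun z => ip X z v).
Proof. exists (hnorm X v). intros z. rewrite Rmult_comm. apply Cauchy_Schwarz. Qed.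

End Functionals.
Section Multiplication.
Context {X : HQA}.
Implicit Types x y z : car X.

Lemma mul_zero_l x : A0 X x -> mul X (vzero X) x = vzero X.
Proof. intros Hx. rewrite <- (vscal_0 (vzero X)) at 1. rewrite mul_scall by auto. apply vscal_0. Qed.

Lemma inv_zero : inv X (vzero X) = vzero X.
Proof.
  rewrite <- (vscal_0 (vzero X)) at 1. rewrite inv_scal.
  replace (Cconj C0) with C0 by (apply Ceq; csimpl; ring). apply vscal_0.
Qed.

Lemma linear_ip_mull y v : A0 X y -> linear_functional X (fun z => ip X (mul X y z) v).
Proof. intros Hy. split; intros; [rewrite mul_addr, ip_addl | rewrite mul_scalr, ip_scall]; auto. Qed.

Lemma linear_ip_mulr y v : A0 X y -> linear_functional X (fun z => ip X (mul X z y) v).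
Proof. intros Hy. split; intros; [rewrite mul_addl, ip_addl | rewrite mul_scall, ip_scall]; auto. Qed.

Lemma continuous_ip_mull y v : A0 X y -> continuous_functional X (fun z => ip X (mul X y z) v).
Proof.
  intros Hy. destruct (mul_boundr X y Hy) as [M HM]. exists (M * hnorm X v). intros z.
  eapply Rle_trans; [apply Cauchy_Schwarz|].
  pose proof (HM z). pose proof (hnorm_ge0 v). unfold hnorm in *. nra.
Qed.

Lemma continuous_ip_mulr y v : A0 X y -> continuous_functional X (fun z => ip X (mul X z y) v).
Proof.
  intros Hy. destruct (mul_boundl X y Hy) as [M HM]. exists (M * hnorm X v). intros z.
  eapply Rle_trans; [apply Cauchy_Schwarz|].
  pose proof (HM z). pose proof (hnorm_ge0 v). unfold hnorm in *. nra.
Qed.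

Lemma ip_mull_adj z y v : A0 X y -> A0 X v -> ip X (mul X y z) v = ip X z (mul X (inv X y) v).
Proof.
  intros Hy Hv. revert z.
  apply (continuous_lf_eq_on_dense (fun z => ip X (mul X y z) v)); auto using
    linear_ip_mull, linear_ipl, continuous_ip_mull, continuous_ipl.
  intros a Ha. apply hax_ii; auto.
Qed.

Lemma ip_mulr_adj_A0 z y u : A0 X z -> A0 X y -> A0 X u ->
  ip X (mul X z y) u = ip X z (mul X u (inv X y)).
Proof.
  intros Hz Hy Hu.
  rewrite hax_iii, inv_mul, <- hax_ii by auto using A0_mul, A0_inv.
  rewrite hax_iii, inv_inv, inv_mul, inv_inv by auto using A0_mul, A0_inv. reflexivity.
Qed.

Lemma ip_mulr_adj_A0r z y u : A0 X y -> A0 X u ->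
  ip X (mul X z y) u = ip X z (mul X u (inv X y)).
Proof.
  intros Hy Hu. revert z.
  apply (continuous_lf_eq_on_dense (fun z => ip X (mul X z y) u)); auto using
    linear_ip_mulr, linear_ipl, continuous_ip_mulr, continuous_ipl.
  intros a Ha. apply ip_mulr_adj_A0; auto.
Qed.

Lemma ip_mulr_adj z u y : A0 X y -> ip X (mul X z y) u = ip X z (mul X u (inv X y)).
Proof.
  intros Hy.
  assert (E : forall u, ip X u (mul X z y) = ip X (mul X u (inv X y)) z).
  { apply (continuous_lf_eq_on_dense (fun u => ip X u (mul X z y))); auto using
      linear_ip_mulr, linear_ipl, continuous_ip_mulr, continuous_ipl, A0_inv.
    intros a Ha. rewrite (ip_herm X (mul X z y) a), ip_mulr_adj_A0r, <- ip_herm by auto.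
    reflexivity. }
  rewrite (ip_herm X u (mul X z y)), E, <- ip_herm. reflexivity.
Qed.

Lemma A0plus_Hplus_w a : A0plus X a -> Hplus_w X a.
Proof.
  intros [l [Hl ->]] x Hx. induction l as [|y l IH]; simpl.
  - rewrite mul_zero_l, ip_0l by auto. split; simpl; lra.
  - assert (Hy : A0 X y) by (apply Hl; left; auto).
    rewrite mul_addl, ip_addl by auto. apply Cnonneg_add.
    + rewrite <- mul_assoc, hax_ii, inv_inv by auto using A0_inv, A0_mul. apply ip_pos.
    + apply IH. intros; apply Hl; right; auto.
Qed.

Lemma Hplus_Hplus_w xi : Hplus X xi -> Hplus_w X xi.
Proof.
  intros Hp x Hx.
  apply (continuous_lf_closure_nonneg (fun z => ip X (mul X z x) x) (A0plus X));
    auto using linear_ip_mulr, continuous_ip_mulr.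
  intros a Ha. apply A0plus_Hplus_w; auto.
Qed.

(* With [z = x y^*]: [<x^* xi x, y^* y> = <xi, z z^*> = <xi z, z>]. *)
Lemma Hplus_w_conj_ip_nonneg xi x y : Hplus_w X xi -> A0 X x -> A0 X y ->
  Cnonneg (ip X (mul X (mul X (inv X x) xi) x) (mul X (inv X y) y)).
Proof.
  intros Hxi Hx Hy.
  rewrite ip_mulr_adj, ip_mull_adj, inv_inv by auto using A0_mul, A0_inv.
  set (z := mul X x (inv X y)).
  assert (Hz : A0 X z) by (unfold z; auto using A0_mul, A0_inv).
  replace (mul X x (mul X (mul X (inv X y) y) (inv X x))) with (mul X z (inv X z)).
  - rewrite <- ip_mulr_adj by auto. apply Hxi; auto.
  - unfold z. rewrite inv_mul, inv_inv, <- (mul_assoc X (inv X y) y (inv X x)),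
      (mul_assoc X x (inv X y)) by auto using A0_inv, A0_mul. reflexivity.
Qed.

Lemma Hplus_w_conj_ip_Hplus xi x eta : Hplus_w X xi -> A0 X x -> Hplus X eta ->
  Cnonneg (ip X eta (mul X (mul X (inv X x) xi) x)).
Proof.
  intros Hxi Hx Heta.
  apply (continuous_lf_closure_nonneg (fun u => ip X u (mul X (mul X (inv X x) xi) x)) (A0plus X));
    auto using linear_ipl, continuous_ipl.
  intros a [l [Hl ->]]. clear Heta. induction l as [|y l IH]; simpl.
  - rewrite ip_0l. split; simpl; lra.
  - rewrite ip_addl. apply Cnonneg_add.
    + rewrite ip_herm. apply Cnonneg_conj, Hplus_w_conj_ip_nonneg; auto.
      apply Hl; left; auto.
    + apply IH. intros; apply Hl; right; auto.
Qed.

End Multiplication.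
Section Projection.
Context {X : HQA}.
Implicit Types x y z : car X.

Definition subspace (K : car X -> Prop) : Prop :=
  K (vzero X) /\ (forall x y, K x -> K y -> K (vadd X x y)) /\
  (forall a x, K x -> K (vscal X a x)).

Definition closed_set (K : car X -> Prop) : Prop := forall x, in_closure K x -> K x.

Lemma kernel_subspace w : linear_functional X w -> subspace (fun k => w k = C0).
Proof.
  intros Hw. split; [|split].
  - apply lf_zero; auto.
  - intros x y Hx Hy. rewrite lf_add, Hx, Hy by auto. apply Ceq; csimpl; ring.
  - intros a x Hx. rewrite lf_scal, Hx by auto. apply Ceq; csimpl; ring.
Qed.

Lemma kernel_closed w : linear_functional X w -> continuous_functional X w ->
  closed_set (fun k => w k = C0).
Proof.
  intros Hw Cw x Hx. apply Cabs_small. intros eps He.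
  destruct (continuous_lf_approx w _ x Hw Cw Hx eps He) as [a [Ha Hlt]].
  rewrite Ha in Hlt. replace (w x) with (Cadd (w x) (Copp C0)); auto.
  apply Ceq; unfold Copp; csimpl; ring.
Qed.

Lemma exists_inf_ge0 (f : car X -> R) (K : car X -> Prop) :
  (exists k, K k) -> (forall k, 0 <= f k) ->
  exists D, 0 <= D /\ (forall k, K k -> D <= f k) /\
    forall d, 0 < d -> exists k, K k /\ f k < D + d.
Proof.
  intros [k0 Hk0] Hf.
  set (E := fun r => exists k, K k /\ r = - f k).
  destruct (completeness E) as [s [Hs1 Hs2]].
  - exists 0. intros r [k [_ ->]]. pose proof (Hf k). lra.
  - exists (- f k0), k0. auto.
  - exists (- s). split; [|split].
    + assert (s <= 0); [|lra]. apply Hs2. intros r [k [_ ->]]. pose proof (Hf k). lra.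
    + intros k Hk. assert (E (- f k)) as Ek by (exists k; auto). apply Hs1 in Ek. lra.
    + intros d Hd. apply NNPP. intros Hn.
      assert (is_upper_bound E (s - d)) as Hub; [|apply Hs2 in Hub; lra].
      intros r [k [Hk ->]]. apply Rnot_lt_le. intros Hlt. apply Hn. exists k. split; auto. lra.
Qed.

Section Minimizer.
Variables (K : car X -> Prop) (x : car X).
Hypotheses (HK : subspace K) (HKc : closed_set K).

(* The midpoint of [k, k'] lies in [K], so the parallelogram law bounds [|k - k'|]. *)
Lemma subspace_parallelogram_bound D k k' :
  (forall m, K m -> D <= nsq (vsub x m)) -> K k -> K k' ->
  nsq (vsub k k') <= 2 * nsq (vsub x k) + 2 * nsq (vsub x k') - 4 * D.
Proof.
  intros HD Hk Hk'. destruct HK as [_ [Kadd Kscal]].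
  set (a := vsub x k). set (b := vsub x k').
  pose proof (parallelogram a b) as P.
  assert (Eab : vsub a b = vsub k' k).
  { unfold a, b. rewrite vopp_add, vopp_opp, vadd_swap, vadd_opp, vadd_0l. apply vadd_comm. }
  set (m := vscal X (mkC (/2) 0) (vadd X k k')).
  assert (Eab2 : vadd X a b = vscal X (mkC 2 0) (vsub x m)).
  { unfold a, b, m. rewrite vadd_swap, vopp_vscal, vscal_distr_v, vscal_assoc.
    replace (Cmul (mkC 2 0) (Copp (mkC (/ 2) 0))) with Cm1
      by (apply Ceq; unfold Cm1, Copp; csimpl; field).
    rewrite <- vopp_scal, vopp_add. f_equal.
    replace (mkC 2 0) with (Cadd Defs.C1 Defs.C1) by (apply Ceq; csimpl; lra).
    rewrite vscal_distr_s, vscal_1. reflexivity. }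
  rewrite Eab, Eab2, nsq_scal in P. cbn [Re Im] in P.
  rewrite <- !hnorm_sq, (hnorm_sub_sym k' k), !hnorm_sq in P.
  pose proof (HD m (Kscal _ _ (Kadd _ _ Hk Hk'))). lra.
Qed.

Lemma projection_exists : exists l, K l /\ forall k, K k -> nsq (vsub x l) <= nsq (vsub x k).
Proof.
  destruct (exists_inf_ge0 (fun k => nsq (vsub x k)) K) as [D [HD0 [HD1 HD2]]];
    [exists (vzero X); apply HK | intros; apply nsq_ge0 |].
  assert (Hex : forall n : nat, exists k, K k /\ nsq (vsub x k) < D + / (INR n + 1)).
  { intros n. apply HD2, Rinv_0_lt_compat. pose proof (pos_INR n). lra. }
  destruct (choice _ Hex) as [ks Hks].
  assert (Hcauchy : forall eps, 0 < eps -> exists N, forall m n, (N <= m)%nat -> (N <= n)%nat ->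
        hnorm X (vsub (ks m) (ks n)) < eps).
  { intros eps He. destruct (inv_INR_small (eps * eps / 4)) as [N HN]; [nra|].
    exists N. intros m n Hm Hn. unfold hnorm.
    rewrite <- sqrt_Rsqr by lra. apply sqrt_lt_1_alt. split; [apply nsq_ge0|].
    destruct (Hks m) as [Km Hm']. destruct (Hks n) as [Kn Hn'].
    pose proof (subspace_parallelogram_bound D _ _ HD1 Km Kn).
    pose proof (HN m Hm). pose proof (HN n Hn). unfold Rsqr, nsq in *. lra. }
  destruct (complete X ks Hcauchy) as [l Hl].
  assert (Kl : K l).
  { apply HKc. intros eps He. destruct (Hl eps He) as [N HN].
    exists (ks N). split; [apply Hks|]. rewrite hnorm_sub_sym. apply HN; auto. }
  exists l. split; auto. intros k Hk. pose proof (HD1 k Hk) as HDk.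
  enough (nsq (vsub x l) <= D) by lra.
  pose proof (sqrt_sqrt D HD0) as HsD. pose proof (sqrt_pos D) as HsD0. set (sD := sqrt D) in *.
  rewrite <- hnorm_sq. set (h := hnorm X (vsub x l)).
  assert (Hh0 : 0 <= h) by apply hnorm_ge0.
  destruct (Rle_or_lt h sD) as [|Hgt]; [nra|]. exfalso.
  set (eps := (h - sD) / 2). assert (He : 0 < eps) by (unfold eps; lra).
  destruct (Hl eps He) as [N1 HN1]. destruct (inv_INR_small (eps * eps)) as [N2 HN2]; [nra|].
  set (n := Nat.max N1 N2).
  specialize (HN1 n (Nat.le_max_l _ _)). specialize (HN2 n (Nat.le_max_r _ _)).
  destruct (Hks n) as [_ Hn].
  pose proof (hnorm_sub_triangle x (ks n) l) as Htri.
  fold (hnorm X (vsub (ks n) l)) in HN1. fold h in Htri.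
  rewrite <- hnorm_sq in Hn. pose proof (hnorm_ge0 (vsub x (ks n))) as Ha0.
  assert (hnorm X (vsub x (ks n)) < sD + eps) by nra.
  unfold eps in *. lra.
Qed.

(* Perturbing the minimizer by [-t <v, x - l> v] for small [t > 0] would decrease the distance. *)
Lemma projection_orthogonal l : K l -> (forall k, K k -> nsq (vsub x l) <= nsq (vsub x k)) ->
  forall v, K v -> ip X v (vsub x l) = C0.
Proof.
  intros Kl Hmin v Kv. destruct HK as [_ [Kadd Kscal]].
  set (z := vsub x l). set (p := Re (ip X v z)). set (q := Im (ip X v z)).
  set (t := / (nsq v + 1)).
  pose proof (nsq_ge0 v) as Gv.
  assert (Ht : 0 < t) by (unfold t; apply Rinv_0_lt_compat; lra).
  assert (Ht1 : t * nsq v < 1).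
  { unfold t. apply (Rmult_lt_reg_r (nsq v + 1)); [lra|].
    rewrite Rmult_assoc, (Rmult_comm (nsq v)), <- Rmult_assoc, Rinv_l by lra. lra. }
  set (a := mkC (- t * p) (t * q)).
  pose proof (Hmin _ (Kadd _ _ Kl (Kscal (Copp a) _ Kv))) as P.
  replace (vsub x (vadd X l (vscal X (Copp a) v))) with (vadd X z (vscal X a v)) in P.
  2:{ unfold z. rewrite vopp_add, vopp_vscal, vadd_assoc. do 2 f_equal.
      apply Ceq; unfold Copp; cbn [Re Im]; ring. }
  rewrite nsq_add_scal in P. unfold a in P; cbn [Re Im] in P. fold z p q in P.
  assert (p * p + q * q <= 0).
  { destruct (Rle_or_lt (p * p + q * q) 0); auto.
    assert (t * (p * p + q * q) * (t * nsq v - 2) >= 0) by nra.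
    assert (t * (p * p + q * q) > 0) by nra. nra. }
  apply Ceq; csimpl; fold z p q; nra.
Qed.

End Minimizer.

Theorem Riesz_representation w : linear_functional X w -> continuous_functional X w ->
  exists eta, forall y, w y = ip X y eta.
Proof.
  intros Hw Cw.
  destruct (classic (exists x, w x <> C0)) as [[x0 Hx0]|Hall].
  2:{ exists (vzero X). intros y. rewrite ip_0r. apply NNPP. intros H. apply Hall. eauto. }
  set (c := w x0) in *. set (nc := Re c * Re c + Im c * Im c).
  assert (Hnc : nc <> 0) by (intros E; apply Hx0; apply Ceq; csimpl; unfold nc in E; nra).
  set (x1 := vscal X (mkC (Re c / nc) (- Im c / nc)) x0).
  assert (Hw1 : w x1 = Defs.C1).
  { unfold x1. rewrite lf_scal by auto. fold c. apply Ceq; csimpl; unfold nc in *; field; auto. }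
  pose proof (kernel_subspace w Hw) as HK.
  destruct (projection_exists _ x1 HK (kernel_closed w Hw Cw)) as [l [Kl Hl]].
  pose proof (projection_orthogonal _ x1 HK l Kl Hl) as Horth.
  set (z := vsub x1 l) in Horth.
  assert (Hwz : w z = Defs.C1).
  { unfold z. rewrite lf_add, lf_opp, Hw1, Kl by auto. apply Ceq; unfold Copp; csimpl; ring. }
  assert (Hnz : 0 < nsq z).
  { pose proof (nsq_ge0 z). destruct (Req_dec (nsq z) 0) as [E0|]; [|lra].
    apply nsq_eq0 in E0. rewrite E0, lf_zero in Hwz by auto. apply (f_equal Re) in Hwz. csimpl. lra. }
  exists (vscal X (mkC (/ nsq z) 0) z). intros y.
  set (u := vadd X y (vscal X (Copp (w y)) z)).
  assert (Ku : w u = C0).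
  { unfold u. rewrite lf_add, lf_scal, Hwz by auto. apply Ceq; unfold Copp; csimpl; ring. }
  pose proof (Horth u Ku) as O. unfold u in O. rewrite ip_addl, ip_scall, ip_self in O.
  rewrite ip_scalr.
  apply Ceq; assert (O1 := f_equal Re O); assert (O2 := f_equal Im O);
    unfold Copp in *; csimpl; field_simplify; try lra;
    apply (Rmult_eq_reg_r (nsq z)); try lra; field_simplify; lra.
Qed.

End Projection.
Section Baire.
Context {X : HQA}.
Implicit Types x y z : car X.

Definition open_set (U : car X -> Prop) : Prop :=
  forall x, U x -> exists d, 0 < d /\ forall y, hnorm X (vsub y x) < d -> U y.

Lemma nested_balls_limit (c : nat -> car X) (r : nat -> R) :
  (forall k, 0 < r k /\ r k <= / (INR k + 1)) ->
  (forall k, hnorm X (vsub (c (S k)) (c k)) + r (S k) <= r k) ->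
  exists L, forall k, hnorm X (vsub L (c k)) <= r k.
Proof.
  intros Hr Hc.
  assert (Hc' : forall k m, (k <= m)%nat -> hnorm X (vsub (c m) (c k)) + r m <= r k).
  { intros k m Hkm. induction Hkm as [|m Hkm IH].
    - rewrite vadd_opp, hnorm_zero. lra.
    - pose proof (hnorm_sub_triangle (c (S m)) (c m) (c k)). pose proof (Hc m). lra. }
  assert (Hcauchy : forall eps, 0 < eps -> exists N, forall m n, (N <= m)%nat -> (N <= n)%nat ->
        hnorm X (vsub (c m) (c n)) < eps).
  { intros eps He. destruct (inv_INR_small (eps / 2)) as [N HN]; [lra|].
    exists N. intros m n Hm Hn.
    pose proof (hnorm_sub_triangle (c m) (c N) (c n)) as T.
    rewrite (hnorm_sub_sym (c N)) in T.
    pose proof (Hc' N m Hm). pose proof (Hc' N n Hn). pose proof (HN N (le_n N)).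
    pose proof (proj2 (Hr N)). pose proof (proj1 (Hr m)). pose proof (proj1 (Hr n)). lra. }
  destruct (complete X c Hcauchy) as [L HL].
  exists L. intros k. apply Rnot_lt_le. intros Hgt.
  set (e := hnorm X (vsub L (c k)) - r k).
  destruct (HL e) as [N HN]; [unfold e; lra|].
  set (m := Nat.max N k). specialize (HN m (Nat.le_max_l _ _)).
  fold (hnorm X (vsub (c m) L)) in HN.
  pose proof (hnorm_sub_triangle L (c m) (c k)) as T.
  rewrite (hnorm_sub_sym L (c m)) in T.
  pose proof (Hc' k m (Nat.le_max_r _ _)). pose proof (proj1 (Hr m)). unfold e in HN. lra.
Qed.

Section Category.
Variable P : nat -> car X -> Prop.
Hypothesis Hopen : forall n, open_set (fun x => ~ P n x).

Lemma Baire_step n c r : 0 < r -> (exists x, hnorm X (vsub x c) < r / 2 /\ ~ P n x) ->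
  exists c' r', 0 < r' /\ r' <= / (INR n + 2) /\ hnorm X (vsub c' c) + r' <= r /\
    forall y, hnorm X (vsub y c') <= r' -> ~ P n y.
Proof.
  intros Hr [x [Hx Hpx]]. destruct (Hopen n x Hpx) as [d [Hd Hdx]].
  assert (0 < / (INR n + 2)) by (apply Rinv_0_lt_compat; pose proof (pos_INR n); lra).
  pose proof (Rmin_l (Rmin (d / 2) (r / 2)) (/ (INR n + 2))).
  pose proof (Rmin_r (Rmin (d / 2) (r / 2)) (/ (INR n + 2))).
  pose proof (Rmin_l (d / 2) (r / 2)). pose proof (Rmin_r (d / 2) (r / 2)).
  exists x, (Rmin (Rmin (d / 2) (r / 2)) (/ (INR n + 2))). repeat split; try lra.
  - repeat apply Rmin_glb_lt; lra.
  - intros y Hy. apply Hdx. lra.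
Qed.

Theorem Baire_category : (forall x, exists n, P n x) ->
  exists n c r, 0 < r /\ forall x, hnorm X (vsub x c) < r -> P n x.
Proof.
  intros Hcov. apply NNPP. intros Hno.
  assert (Hstep : forall p : nat * (car X * R), exists q : car X * R, 0 < snd (snd p) ->
     0 < snd q /\ snd q <= / (INR (fst p) + 2) /\
     hnorm X (vsub (fst q) (fst (snd p))) + snd q <= snd (snd p) /\
     forall y, hnorm X (vsub y (fst q)) <= snd q -> ~ P (fst p) y).
  { intros [n [c r]]. cbn [fst snd]. destruct (Rlt_or_le 0 r) as [Hr|Hr].
    - destruct (Baire_step n c r Hr) as [c' [r' Hcr]].
      + apply NNPP. intros Hn. apply Hno. exists n, c, (r / 2). split; [lra|].
        intros x Hx. apply NNPP. intros Hpx. apply Hn. eauto.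
      + exists (c', r'). auto.
    - exists (vzero X, 1). intros; lra. }
  destruct (choice _ Hstep) as [step Hst].
  set (sq := fix sq (k : nat) : car X * R :=
         match k with O => (vzero X, 1) | S k => step (k, sq k) end).
  set (c := fun k => fst (sq k)). set (r := fun k => snd (sq k)).
  assert (Hr : forall k, 0 < r k /\ r k <= / (INR k + 1)).
  { induction k as [|k [Hk _]].
    - unfold r; simpl. rewrite Rplus_0_l, Rinv_1. lra.
    - destruct (Hst (k, sq k) Hk) as [A1 [A2 _]]. rewrite S_INR.
      replace (INR k + 1 + 1) with (INR (fst (k, sq k)) + 2) by (simpl; ring). auto. }
  destruct (nested_balls_limit c r Hr) as [L HL].
  { intros k. exact (proj1 (proj2 (proj2 (Hst (k, sq k) (proj1 (Hr k)))))). }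
  destruct (Hcov L) as [n Pn].
  exact (proj2 (proj2 (proj2 (Hst (n, sq n) (proj1 (Hr n))))) L (HL (S n)) Pn).
Qed.

End Category.
End Baire.
Section Representable.
Context {X : HQA}.
Implicit Types x y z : car X.
Variable w : car X -> C.
Hypotheses (Hlin : linear_functional X w) (Hcont : continuous_functional X w).

Definition wseminorm x : R := sqrt (Re (w (mul X (inv X x) x))).

Definition w_dominated (g : R) xi : Prop :=
  forall x, A0 X x -> Cabs (w (mul X (inv X xi) x)) <= g * wseminorm x.

Lemma w_dominated_complement_open g : open_set (fun xi => ~ w_dominated g xi).
Proof.
  intros xi Hn. unfold w_dominated in Hn.
  apply not_all_ex_not in Hn as [x Hx]. apply imply_to_and in Hx as [Hx Hlt].
  apply Rnot_le_lt in Hlt.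
  destruct (continuous_functional_bound w Hcont) as [M [HM0 HM]].
  destruct (mul_boundl X x Hx) as [Mx0 HMx0].
  set (Mx := Rabs Mx0).
  assert (HMx : forall v, hnorm X (mul X v x) <= Mx * hnorm X v).
  { intros v. pose proof (HMx0 v). pose proof (Rle_abs Mx0). pose proof (hnorm_ge0 v).
    unfold hnorm, Mx in *. nra. }
  assert (0 <= Mx) by apply Rabs_pos.
  set (gap := Cabs (w (mul X (inv X xi) x)) - g * wseminorm x).
  exists (gap / (M * Mx + 1)). split; [apply Rdiv_lt_0_compat; unfold gap; nra|].
  intros y Hy Py. specialize (Py x Hx).
  replace (inv X y) with (vadd X (inv X (vsub y xi)) (inv X xi)) in Py
    by (rewrite <- inv_add, vsubK; reflexivity).
  rewrite mul_addl, lf_add in Py by auto.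
  set (v := vsub y xi) in *.
  pose proof (Cabs_sub_le (w (mul X (inv X xi) x)) (w (mul X (inv X v) x))).
  pose proof (HM (mul X (inv X v) x)) as Hwv. pose proof (HMx (inv X v)) as Hmv.
  rewrite hnorm_inv in Hmv. apply lt_div_mul in Hy; [|nra].
  pose proof (hnorm_ge0 v). pose proof (hnorm_ge0 (mul X (inv X v) x)).
  assert (Cabs (w (mul X (inv X v) x)) <= M * Mx * hnorm X v) by nra.
  unfold gap in Hy. nra.
Qed.

(* Scaling: both [c] and [c + t xi] with [|t xi| = r/2] lie in the ball, and [w] is linear. *)
Lemma w_dominated_ball_uniform n c r : 0 < r ->
  (forall xi, hnorm X (vsub xi c) < r -> w_dominated (INR n) xi) ->
  forall xi, w_dominated (4 * INR n / r * hnorm X xi) xi.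
Proof.
  intros Hr Hball xi x Hx.
  assert (Hs : 0 <= wseminorm x) by apply sqrt_pos.
  pose proof (pos_INR n) as Hn. pose proof (hnorm_ge0 xi) as Hxi.
  destruct (Req_dec (hnorm X xi) 0) as [E0|NZ].
  { apply hnorm_eq0 in E0. subst xi.
    rewrite inv_zero, mul_zero_l, lf_zero, hnorm_zero by auto.
    unfold Cabs; csimpl. replace (0 * 0 + 0 * 0) with 0 by ring. rewrite sqrt_0. lra. }
  set (t := r / (2 * hnorm X xi)).
  assert (Ht : 0 < t) by (unfold t; apply Rdiv_lt_0_compat; lra).
  set (y := vadd X c (vscal X (mkC t 0) xi)).
  assert (Py : w_dominated (INR n) y).
  { apply Hball. unfold y. rewrite (vadd_comm X c), <- vadd_assoc, vadd_opp, vadd_0.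
    rewrite hnorm_scal, Cabs_real, Rabs_right by lra. unfold t. field_simplify; lra. }
  assert (Pc : w_dominated (INR n) c) by (apply Hball; rewrite vadd_opp, hnorm_zero; auto).
  specialize (Py x Hx). specialize (Pc x Hx).
  unfold y in Py. rewrite inv_add, inv_scal, mul_addl, mul_scall, lf_add, lf_scal in Py by auto.
  pose proof (Cabs_sub_le (Cmul (Cconj (mkC t 0)) (w (mul X (inv X xi) x))) (w (mul X (inv X c) x)))
    as Htri.
  rewrite Cabs_mul, Cabs_conj, Cabs_real, Rabs_right in Htri by lra.
  apply (Rmult_le_reg_l t); auto.
  replace (t * (4 * INR n / r * hnorm X xi * wseminorm x)) with (2 * INR n * wseminorm x)
    by (unfold t; field; lra).
  lra.
Qed.

(* Banach-Steinhaus: (L.3) gives pointwise bounds, Baire makes them uniform on a ball. *)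
Lemma representable_uniform_bound : representable X w ->
  exists K, 0 <= K /\ forall xi, w_dominated (K * hnorm X xi) xi.
Proof.
  intros [_ [_ [_ HL3]]].
  assert (Hcov : forall xi, exists n, w_dominated (INR n) xi).
  { intros xi. destruct (HL3 xi) as [g [Hg Hgx]].
    destruct (archimed g) as [Ha _]. destruct (IZN (up g)) as [n HN]; [apply le_IZR; lra|].
    rewrite HN, <- INR_IZR_INZ in Ha. exists n. intros x Hx.
    eapply Rle_trans; [apply Hgx; auto|].
    assert (0 <= wseminorm x) by apply sqrt_pos. unfold wseminorm in *. nra. }
  destruct (Baire_category (fun n => w_dominated (INR n))
              (fun n => w_dominated_complement_open (INR n)) Hcov) as [n [c [r [Hr Hball]]]].
  exists (4 * INR n / r). split.
  - apply Rmult_le_pos; [pose proof (pos_INR n); lra | apply Rlt_le, Rinv_0_lt_compat; auto].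
  - exact (w_dominated_ball_uniform n c r Hr Hball).
Qed.

Section RepresentingVector.
Variable eta : car X.
Hypothesis Heta : forall y, w y = ip X y eta.

Lemma representing_vector_Hplus_w : representable X w -> Hplus_w X eta.
Proof.
  intros [_ [HL1 _]] z Hz.
  rewrite ip_mulr_adj, ip_herm, <- Heta by auto.
  apply Cnonneg_conj. rewrite <- (inv_inv X z) at 1. apply HL1, A0_inv; auto.
Qed.

(* For [z] in [A0], apply the uniform bound to [xi = (eta z)^*] and [x = z^*]:
   [|eta z|^2 <= K |eta z| <eta z, z>^(1/2) <= K |eta z|^(3/2) |z|^(1/2)]. *)
Lemma representing_vector_bounded : representable X w -> bounded_elt X eta.
Proof.
  intros Hrep. pose proof (representing_vector_Hplus_w Hrep) as Hew.
  destruct (representable_uniform_bound Hrep) as [K [HK0 HK]].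
  exists (K * K). intros z Hz.
  specialize (HK (inv X (mul X eta z)) (inv X z) (A0_inv X z Hz)).
  unfold wseminorm in HK. rewrite !inv_inv, hnorm_inv, !Heta in HK.
  rewrite ip_mulr_adj, inv_inv, ip_self, Cabs_real in HK by auto using A0_inv.
  rewrite ip_herm, <- ip_mulr_adj in HK by auto.
  set (N := hnorm X (mul X eta z)) in *.
  assert (HN0 : 0 <= N) by apply hnorm_ge0.
  rewrite <- (hnorm_sq (mul X eta z)), Rabs_right in HK by nra. fold N in HK.
  set (R := Re (Cconj (ip X (mul X eta z) z))) in *.
  assert (HR0 : 0 <= R) by (pose proof (Hew z Hz) as [_ A]; unfold R; csimpl; lra).
  assert (HR : R <= N * hnorm X z).
  { pose proof (Cauchy_Schwarz (mul X eta z) z) as CS.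
    pose proof (Re_le_Cabs (ip X (mul X eta z) z)).
    pose proof (Rle_abs (Re (ip X (mul X eta z) z))). unfold R. csimpl. fold N in CS. lra. }
  pose proof (sqrt_sqrt R HR0) as HS. pose proof (sqrt_pos R) as HS0.
  set (S := sqrt R) in *.
  pose proof (hnorm_ge0 z).
  destruct (Req_dec N 0) as [->|NZ]; [nra|].
  assert (N <= K * S) by nra.
  assert (N * N <= K * K * (S * S)) by nra.
  nra.
Qed.

End RepresentingVector.
End Representable.
Theorem mainTheorem14 (X : HQA) :
  condP X ->
  (forall xi : car X, Hplus_wb X xi -> Hplus X xi) ->
  forall xi : car X, Hplus X xi <-> Hplus_w X xi.
Proof.
  intros HP Hwb xi. split; [apply Hplus_Hplus_w|].
  intros Hxi. apply HP. intros w Hw x Hx.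
  destruct Hw as [Hrep Hcont]. pose proof (proj1 Hrep) as Hlin.
  destruct (Riesz_representation w Hlin Hcont) as [eta Heta].
  assert (Hpe : Hplus X eta).
  { apply Hwb. split.
    - exact (representing_vector_bounded w Hlin Hcont eta Heta Hrep).
    - exact (representing_vector_Hplus_w w eta Heta Hrep). }
  rewrite Heta, ip_herm. apply Cnonneg_conj, Hplus_w_conj_ip_Hplus; auto.
Qed.
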